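(* Let $k\ge2$ and $G=BS(1,k)\cong\mathbb{Z}[1/k]\rtimes\mathbb{Z}$. Every conjugacy geodesic $w$ for a conjugacy class $[(x,m)]$ with $m>0$ is, up to a cyclic permutation, of the form $a^{x_0}ta^{x_1}t\cdots a^{x_{m-1}}t$ for some $x_0,\ldots,x_{m-1}\in\mathbb{Z}$.
   Context: $BS(1,k)=\langle a,t\mid tat^{-1}=a^k\rangle$ is identified with $\mathbb{Z}[1/k]\rtimes\mathbb{Z}$ via $a\mapsto(1,0)$, $t\mapsto(0,1)$, the generator of $\mathbb{Z}$ acting by multiplication by $k$; elements are pairs $(x,m)$. $a^x$ denotes $|x|$ copies of $a$ or $a^{-1}$ according to the sign of $x$. Word length is with respect to $\{a,t\}$. A word $w$ is a conjugacy geodesic for the class $[g]$ if it is a geodesic word representing an element of $[g]$ of minimal length among all elements of $[g]$. *)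

(* BS(1,k) modelled as Z[1/k] ⋊ Z inside rat * int. *)
From mathcomp Require Import all_boot all_order all_algebra.
Set Implicit Arguments. Unset Strict Implicit. Unset Printing Implicit Defensive.
Import Order.TTheory GRing.Theory Num.Theory.
Local Open Scope ring_scope.

Inductive letter := A | Ai | T | Ti.
Definition word := seq letter.

(* Elements of Z[1/k] ⋊ Z are pairs (x, m); the generator of Z acts by
   multiplication by k: (x,m)(y,n) = (x + k^m y, m + n). *)
Definition bs_mul (k : nat) (g h : rat * int) : rat * int :=
  (g.1 + (k%:R : rat) ^ g.2 * h.1, g.2 + h.2).
Definition bs_inv (k : nat) (g : rat * int) : rat * int :=
  (- ((k%:R : rat) ^ (- g.2) * g.1), - g.2).
Definition bs_one : rat * int := (0, 0).

Definition eval_letter (k : nat) (l : letter) : rat * int :=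
  match l with
  | A => (1, 0) | Ai => (-1, 0) | T => (0, 1) | Ti => (0, -1)
  end.

Definition eval_word (k : nat) (w : word) : rat * int :=
  foldr (fun l g => bs_mul k (eval_letter k l) g) bs_one w.

Definition inZk (k : nat) (x : rat) : Prop :=
  exists (z : int) (n : nat), x = z%:~R / (k%:R ^+ n).

(* h is conjugate in G to g; words generate G so conjugators are words. *)
Definition conjugate (k : nat) (g h : rat * int) : Prop :=
  exists u : word, bs_mul k (bs_mul k (eval_word k u) g) (bs_inv k (eval_word k u)) = h.

Definition geodesic (k : nat) (w : word) : Prop :=
  forall u : word, eval_word k u = eval_word k w -> (size w <= size u)%N.

Definition conj_geodesic (k : nat) (g : rat * int) (w : word) : Prop :=
  [/\ geodesic k w, conjugate k g (eval_word k w) &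
      forall u : word, conjugate k g (eval_word k u) -> (size w <= size u)%N].

Definition apow (x : int) : word := nseq `|x|%N (if (0 <= x) then A else Ai).

Definition normal_form (xs : seq int) : word :=
  flatten [seq apow x ++ [:: T] | x <- xs].

From HB Require Import structures.
From mathcomp Require Import all_boot all_order all_algebra.
From mathcomp Require Import zify ring.
Set Implicit Arguments.
Unset Strict Implicit.
Unset Printing Implicit Defensive.
Import Order.TTheory GRing.Theory Num.Theory.
Local Open Scope ring_scope.

(* Read a word [w] of t-exponent sum [n > 0] cyclically, keeping the reading
   position modulo [n] (each [t] moves it forward, each [t^-1] back), and add
   each [a^(+-1)] to the entry at the current position of a vector [c] in [Z^n].
   Conjugating [(y, n)] by [(z, 0)], [z] in [Z[1/k]], replaces [y] by
   [y - (k^n - 1) z], and the first coordinate of [w] is congruent to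
   [sum_i c_i k^i] modulo [(k^n - 1) Z[1/k]]; hence [a^c_0 t ... a^c_(n-1) t]
   is conjugate to [w].  Its length is [n + sum_i |c_i| <= n + #a(w)], while
   [|w| = n + #a(w) + 2 #t^-1(w)], so a word of minimal length in the class has
   no letter [t^-1].  Rotated to end with [t], it is then a product of blocks
   [u t], [u] a word in [a^(+-1)]; replacing each [u] by the power of [a] it
   represents stays in the class and shortens the word unless [u] already is
   that power. *)

Definition letter_eqb (l l' : letter) : bool :=
  match l, l' with A, A | Ai, Ai | T, T | Ti, Ti => true | _, _ => false end.

Lemma letter_eqP : Equality.axiom letter_eqb.
Proof. by do 2!case; constructor. Qed.

HB.instance Definition _ := hasDecEq.Build letter letter_eqP.

Lemma mem_rot_rcons (U : eqType) (x : U) (s : seq U) :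
  x \in s -> exists i s', rot i s = rcons s' x.
Proof.
case/splitPr=> p q; exists (size (rcons p x)), (q ++ p).
by rewrite -cat_rcons rot_size_cat rcons_cat.
Qed.

Section BaumslagSolitar.

Variable k : nat.
Hypothesis k_gt0 : (0 < k)%N.

Local Notation K := (k%:R : rat).
Local Notation eval := (eval_word k).

(** * The group law and conjugacy *)

Lemma k_unit : K \is a GRing.unit.
Proof. by rewrite unitfE pnatr_eq0 -lt0n. Qed.

Lemma bs_mulA g h l : bs_mul k g (bs_mul k h l) = bs_mul k (bs_mul k g h) l.
Proof.
case: g h l => [g1 g2] [h1 h2] [l1 l2]; rewrite /bs_mul /=.
by rewrite (exprzDr k_unit) addrA mulrDr mulrA addrA.
Qed.

Lemma bs_mul1g g : bs_mul k bs_one g = g.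
Proof. by case: g => g1 g2; rewrite /bs_mul /= expr0z mul1r !add0r. Qed.

Lemma bs_mulg1 g : bs_mul k g bs_one = g.
Proof. by case: g => g1 g2; rewrite /bs_mul /= mulr0 !addr0. Qed.

Lemma bs_mulgV g : bs_mul k g (bs_inv k g) = bs_one.
Proof.
case: g => g1 g2; rewrite /bs_mul /bs_inv /bs_one /=.
by rewrite mulrN mulrA -(exprzDr k_unit) !subrr expr0z mul1r subrr.
Qed.

Lemma bs_invM g h : bs_inv k (bs_mul k g h) = bs_mul k (bs_inv k h) (bs_inv k g).
Proof.
case: g h => [g1 g2] [h1 h2]; rewrite /bs_mul /bs_inv /=; congr pair; last by ring.
have e : K ^ (- g2) * K ^ g2 = 1 by rewrite -(exprzDr k_unit) addNr expr0z.
rewrite !opprD !(exprzDr k_unit) mulrDr [_ * (K ^ g2 * h1)]mulrA.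
by rewrite [_ * K ^ g2]mulrAC e mul1r; ring.
Qed.

Lemma eval_word_cat u v : eval (u ++ v) = bs_mul k (eval u) (eval v).
Proof. by elim: u => [|l u IH] /=; rewrite ?bs_mul1g // IH bs_mulA. Qed.

Lemma conjugate_trans g h l : conjugate k g h -> conjugate k h l -> conjugate k g l.
Proof.
move=> [u <-] [v <-]; exists (v ++ u).
by rewrite eval_word_cat bs_invM !bs_mulA.
Qed.

Lemma conjugate_rot i w : conjugate k (eval w) (eval (rot i w)).
Proof.
rewrite /rot -{1}(cat_take_drop i w); exists (drop i w).
by rewrite !eval_word_cat bs_mulA -bs_mulA bs_mulgV bs_mulg1.
Qed.

Lemma conjugate_snd g h : conjugate k g h -> h.2 = g.2.
Proof. by move=> [u <-]; rewrite /= addrC addrA addNr add0r. Qed.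

Lemma eval_word_snd w : (eval w).2 = (count_mem T w)%:Z - (count_mem Ti w)%:Z.
Proof. by elim: w => [|[] w IH] //=; rewrite IH !PoszD; ring. Qed.

Lemma eval_nseq l n :
  eval (nseq n l) = ((eval_letter k l).1 *+ n, (eval_letter k l).2 *+ n).
Proof.
case: l; elim: n => [|n IH] //=; rewrite IH /bs_mul /=.
all: by rewrite ?expr0z ?mul1r ?mul0rn ?mulr0 ?add0r -?mulrS.
Qed.

Lemma eval_apow z : eval (apow z) = (z%:~R, 0).
Proof. by case: z => n; rewrite /apow eval_nseq /= mul0rn // NegzE mulNrn intrN. Qed.

Lemma size_count_letters (w : word) :
  size w = (count_mem A w + count_mem Ai w + count_mem T w + count_mem Ti w)%N.
Proof. by elim: w => [|[] w IH] //=; rewrite IH !add0n ?add1n ?addSn ?addnS. Qed.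

(** * Conjugacy within a fixed height *)

Lemma k_neq0 : K != 0.
Proof. by rewrite pnatr_eq0 -lt0n. Qed.

Lemma inZk_int z : inZk k z%:~R.
Proof. by exists z, 0%N; rewrite expr0 divr1. Qed.

Lemma inZkD x y : inZk k x -> inZk k y -> inZk k (x + y).
Proof.
move=> [z1 [e1 ->]] [z2 [e2 ->]].
exists (z1 * (k ^ e2)%N%:Z + z2 * (k ^ e1)%N%:Z), (e1 + e2)%N.
rewrite intrD !intrM -!pmulrn !natrX exprD; field.
by rewrite !expf_neq0 ?k_neq0.
Qed.

Lemma inZkN x : inZk k x -> inZk k (- x).
Proof. by move=> [z [e ->]]; exists (- z), e; rewrite intrN mulNr. Qed.

Lemma inZkM x y : inZk k x -> inZk k y -> inZk k (x * y).
Proof.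
move=> [z1 [e1 ->]] [z2 [e2 ->]]; exists (z1 * z2), (e1 + e2)%N.
by rewrite intrM exprD invfM mulrACA.
Qed.

Lemma inZk_expz i : inZk k (K ^ i).
Proof.
case: i => n; first by exists (k ^ n)%N%:Z, 0%N; rewrite expr0 divr1 -pmulrn natrX.
by exists 1, n.+1; rewrite NegzE -exprnN div1r.
Qed.

Lemma eval_word_inZk w : inZk k (eval w).1.
Proof.
elim: w => [|l w IH]; first exact: (inZk_int 0).
apply: inZkD; last exact: inZkM (inZk_expz _) IH.
by case: l; [exact: (inZk_int 1) | exact: (inZk_int (-1)) | exact: (inZk_int 0)..].
Qed.

Lemma word_of_inZk y : inZk k y -> exists u, eval u = (y, 0).
Proof.
move=> [z [e ->]]; exists (nseq e Ti ++ apow z ++ nseq e T).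
rewrite !eval_word_cat eval_apow !eval_nseq /bs_mul /=.
by rewrite !mul0rn !mulr0 !addr0 !add0r mulNrn natz -exprnN mulrC addNr.
Qed.

Definition dvdZk (n : nat) (d : rat) : Prop :=
  exists2 z, inZk k z & d = (K ^+ n - 1) * z.

Lemma dvdZk0 n : dvdZk n 0.
Proof. by exists 0; [exact: (inZk_int 0) | rewrite mulr0]. Qed.

Lemma dvdZkD n d d' : dvdZk n d -> dvdZk n d' -> dvdZk n (d + d').
Proof.
by move=> [z hz ->] [z' hz' ->]; exists (z + z'); [exact: inZkD | rewrite mulrDr].
Qed.

Lemma dvdZk_mulr n z : inZk k z -> dvdZk n ((K ^+ n - 1) * z).
Proof. by exists z. Qed.

Lemma conjugate_of_dvdZk (n : nat) y y' :
  dvdZk n (y - y') -> conjugate k (y, n%:Z) (y', n%:Z).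
Proof.
move=> [z hz e]; have [u hu] := word_of_inZk hz; exists u.
rewrite hu /bs_mul /bs_inv /= oppr0 !expr0z mul1r !add0r addr0 -exprnP.
have -> : y' = y - (y - y') by ring.
by rewrite e; congr pair; ring.
Qed.

(** * Collecting the powers of a by position modulo the height *)

Definition add_nth (c : seq int) (r : nat) (d : int) : seq int :=
  set_nth 0 c r (nth 0 c r + d).

Definition norm1 (c : seq int) : nat := sumn (map absz c).

Lemma size_add_nth c r d : (r < size c)%N -> size (add_nth c r d) = size c.
Proof. by move=> lt_rc; rewrite size_set_nth; apply/maxn_idPr. Qed.

Lemma norm1_add_nth c r d :
  (r < size c)%N -> (norm1 (add_nth c r d) <= norm1 c + `|d|)%N.
Proof.
rewrite /norm1 /add_nth; elim: c r => [|x c IH] [|r] //= lt_rc.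
  by rewrite addnAC leq_add2r -lez_nat !abszE ler_normD.
by rewrite -addnA leq_add2l IH.
Qed.

Fixpoint expansion (c : seq int) : rat :=
  if c is x :: c' then x%:~R + K * expansion c' else 0.

Lemma expansion_nseq0 n : expansion (nseq n 0) = 0.
Proof. by elim: n => //= n ->; rewrite mulr0 addr0. Qed.

Lemma expansion_add_nth c r d :
  (r < size c)%N -> expansion (add_nth c r d) = expansion c + d%:~R * K ^+ r.
Proof.
rewrite /add_nth; elim: c r => [|x c IH] [|r] //= lt_rc.
  by rewrite intrD expr0 mulr1 addrAC.
by rewrite IH // exprS; ring.
Qed.

Lemma normal_form_cons x xs : normal_form (x :: xs) = apow x ++ T :: normal_form xs.
Proof. by rewrite /normal_form /= -catA. Qed.

Lemma size_normal_form xs : size (normal_form xs) = (size xs + norm1 xs)%N.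
Proof.
elim: xs => [|x xs IH] //; rewrite normal_form_cons size_cat /= IH size_nseq.
by rewrite /norm1 /=; lia.
Qed.

Lemma eval_normal_form xs : eval (normal_form xs) = (expansion xs, (size xs)%:Z).
Proof.
elim: xs => [|x xs IH] //; rewrite normal_form_cons eval_word_cat eval_apow /= IH.
rewrite /bs_mul /= expr0z expr1z mul1r !add0r.
by congr pair; rewrite -addn1 PoszD addrC.
Qed.

Definition succ_mod (n r : nat) : nat := if r.+1 == n then 0 else r.+1.
Definition pred_mod (n r : nat) : nat := if r == 0 then n.-1 else r.-1.

Lemma succ_mod_lt n r : (r < n)%N -> (succ_mod n r < n)%N.
Proof. by rewrite /succ_mod; case: eqP; lia. Qed.

Lemma pred_mod_lt n r : (r < n)%N -> (pred_mod n r < n)%N.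
Proof. by rewrite /pred_mod; case: eqP; lia. Qed.

(* The vector [c] of the proof sketch above, reading from position [r]. *)
Fixpoint collect (n r : nat) (w : word) : seq int :=
  match w with
  | [::] => nseq n 0
  | A :: w => add_nth (collect n r w) r 1
  | Ai :: w => add_nth (collect n r w) r (-1)
  | T :: w => collect n (succ_mod n r) w
  | Ti :: w => collect n (pred_mod n r) w
  end.

Lemma size_collect n r w : (r < n)%N -> size (collect n r w) = n.
Proof.
elim: w r => [|[] w IH] r lt_rn /=; first by rewrite size_nseq.
- by rewrite size_add_nth IH.
- by rewrite size_add_nth IH.
- exact/IH/succ_mod_lt.
- exact/IH/pred_mod_lt.
Qed.

Lemma norm1_collect n r w :
  (r < n)%N -> (norm1 (collect n r w) <= count_mem A w + count_mem Ai w)%N.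
Proof.
elim: w r => [|[] w IH] r lt_rn /=.
- by rewrite /norm1; elim: n {lt_rn}.
- apply: leq_trans (norm1_add_nth 1 _) _; first by rewrite size_collect.
  by have := IH r lt_rn; rewrite /=; lia.
- apply: leq_trans (norm1_add_nth (-1) _) _; first by rewrite size_collect.
  by have := IH r lt_rn; rewrite abszN /=; lia.
- exact/IH/succ_mod_lt.
- exact/IH/pred_mod_lt.
Qed.

Lemma collect_congr n r w : (r < n)%N ->
  dvdZk n (K ^+ r * (eval w).1 - expansion (collect n r w)).
Proof.
elim: w r => [|l w IH] r lt_rn /=.
  by rewrite expansion_nseq0 mulr0 subr0; apply: dvdZk0.
have dvdZk_eq d d' : dvdZk n d -> d = d' -> dvdZk n d' by move=> ? <-.
have w_Zk := eval_word_inZk w.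
rewrite /bs_mul /=; case: l => /=.
- rewrite expansion_add_nth ?size_collect //.
  by apply: dvdZk_eq (IH r lt_rn) _; rewrite expr0z; ring.
- rewrite expansion_add_nth ?size_collect //.
  by apply: dvdZk_eq (IH r lt_rn) _; rewrite expr0z; ring.
- rewrite /succ_mod; case: eqP => rn; last first.
    by apply: dvdZk_eq (IH r.+1 _) _; [lia | rewrite exprS expr1z; ring].
  (* wrapping around multiplies by [k^n], which is [1] modulo [k^n - 1] *)
  apply: dvdZk_eq (dvdZkD (IH 0%N _) (dvdZk_mulr n w_Zk)) _; first by rewrite -rn.
  by rewrite -rn exprS expr1z; ring.
- rewrite /pred_mod; case: r lt_rn => [|r] lt_rn /=; last first.
    apply: dvdZk_eq (IH r _) _; first lia.
    by rewrite exprS exprN1; field; apply: k_neq0.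
  have Zk_e' := inZkN (inZkM (inZk_expz (-1)) w_Zk).
  apply: dvdZk_eq (dvdZkD (IH n.-1 _) (dvdZk_mulr n Zk_e')) _; first lia.
  by case: n lt_rn {IH} => // n _; rewrite exprS exprN1 /=; field; apply: k_neq0.
Qed.

Lemma conjugate_normal_form_collect n w : (0 < n)%N -> (eval w).2 = n%:Z ->
  conjugate k (eval w) (eval (normal_form (collect n 0 w))).
Proof.
move=> n_gt0 w2; rewrite eval_normal_form size_collect // [eval w]surjective_pairing w2.
by apply: conjugate_of_dvdZk; have := collect_congr w n_gt0; rewrite expr0 mul1r.
Qed.

Definition conj_minimal (g : rat * int) (w : word) : Prop :=
  conjugate k g (eval w) /\ forall u, conjugate k g (eval u) -> (size w <= size u)%N.

Lemma conj_minimal_rot g w i : conj_minimal g w -> conj_minimal g (rot i w).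
Proof.
move=> [g_w w_min]; split; first exact: conjugate_trans g_w (conjugate_rot i w).
by rewrite size_rot.
Qed.

Lemma conj_minimal_Ti_free (n : nat) x w :
  (0 < n)%N -> conj_minimal (x, n%:Z) w -> Ti \notin w.
Proof.
move=> n_gt0 [g_w w_min]; have w2 := conjugate_snd g_w; apply/count_memPn.
have := w_min _ (conjugate_trans g_w (conjugate_normal_form_collect n_gt0 w2)).
rewrite size_normal_form size_collect // size_count_letters.
by have := norm1_collect w n_gt0; have := eval_word_snd w; rewrite w2 /=; lia.
Qed.

(** * Words without t^-1 *)

Definition blocks (bs : seq word) : word := flatten [seq b ++ [:: T] | b <- bs].

Lemma blocks_cons b bs : blocks (b :: bs) = b ++ T :: blocks bs.
Proof. by rewrite /blocks /= -catA. Qed.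

Lemma normal_form_blocks xs : normal_form xs = blocks (map apow xs).
Proof. by rewrite /normal_form /blocks -map_comp. Qed.

Lemma size_blocks_map (f : word -> word) bs :
  {in bs, forall b, size (f b) <= size b ?= iff (f b == b)}%N ->
  (size (blocks (map f bs)) <= size (blocks bs) ?= iff (map f bs == bs))%N.
Proof.
elim: bs => [|b bs IH] f_le; first exact: leqif_eq.
rewrite /= !blocks_cons !size_cat /= eqseq_cons.
apply: leqif_add; first exact/f_le/mem_head.
by rewrite (mono_leqif ltnS); apply: IH => b' b'_bs; apply/f_le; rewrite inE b'_bs orbT.
Qed.

Definition a_letter (l : letter) : bool := l \in [:: A; Ai].

Definition a_exponent (b : word) : int := (count_mem A b)%:Z - (count_mem Ai b)%:Z.

Lemma blocks_of_Ti_free v :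
  Ti \notin v -> exists2 bs, rcons v T = blocks bs & all (all a_letter) bs.
Proof.
elim: v => [|l v IH]; first by exists [:: [::]].
rewrite inE negb_or => /andP[l_Ti /IH[[|b bs] v_bs a_bs]].
  by have := congr1 size v_bs; rewrite size_rcons.
case: l l_Ti => // _.
- by exists ((A :: b) :: bs); rewrite ?rcons_cons ?v_bs.
- by exists ((Ai :: b) :: bs); rewrite ?rcons_cons ?v_bs.
- by exists ([::] :: b :: bs); rewrite ?rcons_cons ?v_bs.
Qed.

Lemma count_T_blocks bs : all (all a_letter) bs -> count_mem T (blocks bs) = size bs.
Proof.
elim: bs => [|b bs IH] //= /andP[a_b /IH <-].
rewrite blocks_cons count_cat /=; suff /count_memPn -> : T \notin b by [].
by apply: contraTN a_b => T_b; apply/allPn; exists T.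
Qed.

Lemma size_a_word b : all a_letter b -> size b = (count_mem A b + count_mem Ai b)%N.
Proof.
elim: b => [|l b IH] //= /andP[]; rewrite /a_letter !inE => /orP[]/eqP-> /IH /= ->.
  by rewrite add1n.
by rewrite add0n addnS.
Qed.

Lemma a_exponent_nseqA n : a_exponent (nseq n A) = n.
Proof. by rewrite /a_exponent !count_nseq /= mul1n mul0n subr0. Qed.

Lemma a_exponent_nseqAi n : a_exponent (nseq n Ai) = - n%:Z.
Proof. by rewrite /a_exponent !count_nseq /= mul1n mul0n sub0r. Qed.

Lemma apow_a_exponent b :
  all a_letter b -> (A \notin b) || (Ai \notin b) -> apow (a_exponent b) = b.
Proof.
move=> a_b /orP[A_b | Ai_b].
  have /all_pred1P -> : all (pred1 Ai) b.
    apply/allP => x x_b; move/allP/(_ x x_b): a_b.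
    by rewrite /a_letter !inE => /orP[/eqP x_A | //]; rewrite -x_A x_b in A_b.
  by rewrite a_exponent_nseqAi; case: (size b).
have /all_pred1P -> : all (pred1 A) b.
  apply/allP => x x_b; move/allP/(_ x x_b): a_b.
  by rewrite /a_letter !inE => /orP[// | /eqP x_Ai]; rewrite -x_Ai x_b in Ai_b.
by rewrite a_exponent_nseqA.
Qed.

Lemma size_apow_a_exponent b : all a_letter b ->
  (size (apow (a_exponent b)) <= size b ?= iff (apow (a_exponent b) == b))%N.
Proof.
move=> a_b; apply/leqifP; case: eqP => [-> // | ne].
have /norP[/negbNE A_b /negbNE Ai_b] : ~~ ((A \notin b) || (Ai \notin b)).
  by apply/negP => /(apow_a_exponent a_b).
rewrite -has_pred1 has_count in A_b; rewrite -has_pred1 has_count in Ai_b.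
by rewrite size_nseq size_a_word // /a_exponent; lia.
Qed.

Lemma eval_a_word b : all a_letter b -> eval b = ((a_exponent b)%:~R, 0).
Proof.
elim: b => [|l b IH] //= /andP[]; rewrite /a_letter !inE => /orP[]/eqP-> /IH ->.
all: rewrite /bs_mul /a_exponent /= expr0z mul1r addr0; congr pair.
all: by rewrite !PoszD; ring.
Qed.

Lemma eval_blocks_map (f : word -> word) bs :
  {in bs, forall b, eval (f b) = eval b} -> eval (blocks (map f bs)) = eval (blocks bs).
Proof.
elim: bs => [|b bs IH] f_eq //=; rewrite !blocks_cons !eval_word_cat f_eq ?mem_head //=.
by rewrite IH // => b' b'_bs; apply: f_eq; rewrite inE b'_bs orbT.
Qed.

Lemma conj_minimal_blocks g bs : all (all a_letter) bs ->
  conj_minimal g (blocks bs) -> blocks bs = normal_form (map a_exponent bs).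
Proof.
move=> /allP a_bs [g_w w_min]; rewrite normal_form_blocks -map_comp.
have f_le b (b_bs : b \in bs) := size_apow_a_exponent (a_bs b b_bs).
have := w_min (blocks (map (apow \o a_exponent) bs)).
rewrite eval_blocks_map => [/(_ g_w)|b /a_bs a_b]; last by rewrite /= eval_apow eval_a_word.
by rewrite (geq_leqif (size_blocks_map f_le)) => /eqP ->.
Qed.

End BaumslagSolitar.

Theorem proposition4p2 (k : nat) (hk : (2 <= k)%N) (x : rat) (m : int)
  (hx : inZk k x) (hm : 0 < m) (w : word) :
  conj_geodesic k (x, m) w ->
  exists (i : nat) (xs : seq int),
    (size xs)%:Z = m /\ rot i w = normal_form xs.
Proof.
have k_gt0 : (0 < k)%N by apply: leq_trans hk.
case: m hm => [n n_gt0 | //] [_ g_w w_min].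
have min_w : conj_minimal k (x, n%:Z) w by split.
have Ti_w := conj_minimal_Ti_free k_gt0 n_gt0 min_w.
have count_T : count_mem T w = n.
  apply/eqP; rewrite -eqz_nat -[n%:Z](conjugate_snd g_w) eval_word_snd.
  by rewrite (count_memPn Ti_w) subr0.
have [i [v w_v]] : exists i v, rot i w = rcons v T.
  by apply: mem_rot_rcons; rewrite -has_pred1 has_count count_T.
have Ti_v : Ti \notin v by move: Ti_w; rewrite -(mem_rot i) w_v mem_rcons inE.
have [bs v_bs a_bs] := blocks_of_Ti_free Ti_v.
exists i, (map a_exponent bs); split.
  have /permPl/permP count_rot := perm_rot i w.
  by rewrite size_map -count_T_blocks // -v_bs -w_v count_rot count_T.
have := conj_minimal_rot k_gt0 i min_w.
by rewrite w_v v_bs => /(conj_minimal_blocks k_gt0 a_bs).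
Qed.
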